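(* In the setting below, if $g(x)$ is self-reciprocal, then $\gcd(t_{22}(x),g_{12}(x))=1$ if and only if $\gcd\big(t_{22}(x),\ g_{11}(x)\bar g_{11}(x)+g_{12}(x)\bar g_{12}(x)\big)=1$.
   Context: Let $q$ be a prime power, $F=\mathbb{F}_q$, $m\ge1$ with $\gcd(q,m)=1$. For a nonzero polynomial $f$ of degree $k$, $f^*(x)=x^kf(x^{-1})$; $f$ is self-reciprocal if $f^*=\alpha f$ for some $\alpha\in F$. For a polynomial $f$ of degree at most $m$, $\bar f(x)=x^m f(x^{-1})$. Let $g_{11},g_{12}\in F[x]$ with $g_{11}\mid x^m-1$ and $\deg g_{12}<m$ (so that $(g_{11},g_{12})$ generates a one-generator quasi-cyclic code of index 2 in $(F[x]/\langle x^m-1\rangle)^2$). Let $g=\gcd(g_{11},g_{12})$, $g_{11}=g\,g_{11}'$, $g_{22}=(x^m-1)/g_{11}'$, $g_{22}=g\,g_{22}'$, $r_{22}=\gcd(g_{22}',g_{22}'^* )$, $t_{22}=g_{22}'/r_{22}$. *)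

From mathcomp Require Import all_boot all_order all_algebra all_field.
Set Implicit Arguments. Unset Strict Implicit. Unset Printing Implicit Defensive.
Import GRing.Theory.
Local Open Scope ring_scope.

(* Reciprocal polynomial f^*(x) = x^k f(1/x), k = deg f = (size f).-1 :
   coefficient i of f^* is coefficient k - i of f. *)
Definition recip {R : nzRingType} (f : {poly R}) : {poly R} :=
  \poly_(i < size f) f`_((size f).-1 - i).

Definition self_reciprocal {R : nzRingType} (f : {poly R}) : Prop :=
  f != 0 /\ exists alpha : R, recip f = alpha *: f.

(* bar f (x) = x^m f(1/x), for deg f <= m. *)
Definition barp {R : nzRingType} (m : nat) (f : {poly R}) : {poly R} :=
  \poly_(i < m.+1) f`_(m - i).

From mathcomp Require Import all_boot all_order all_algebra all_field.
Import GRing.Theory.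
Set Implicit Arguments.
Unset Strict Implicit.
Unset Printing Implicit Defensive.
Local Open Scope ring_scope.

Local Notation "p ^ f" := (map_poly f p) : ring_scope.

(* Over an algebraic closure, coprimality means having no common root.  Let
   Q = (X^m - 1)/g11, which equals g22'; X^m - 1 is separable because m != 0
   in F.  A root x of t22 is a root of Q but not of r22, so Q(1/x) != 0 and
   hence g11(1/x) = 0; since x^m = 1, the second polynomial evaluates at x to
   g12(x) g12(1/x).  Finally g12(1/x) != 0: otherwise g(1/x) = 0, so g(x) = 0
   by self-reciprocity, and x would be a common root of g11 and Q. *)

Lemma pchar_dvd_card (F : finFieldType) p : p \in [pchar F] -> (p %| #|F|)%N.
Proof.
move=> pF; have := card_pprimeChar pF; set n := logn _ _ => cardF.
have n_gt0 : (0 < n)%N.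
  by rewrite lt0n; apply: contraTneq (finNzRing_gt1 F) => n0; rewrite cardF n0.
by rewrite cardF dvdn_exp.
Qed.

Lemma natf_neq0_coprime_card (F : finFieldType) m : coprime #|F| m -> m%:R != 0 :> F.
Proof.
have [p p_pr pF] := finPcharP F.
rewrite -(dvdn_pcharf pF); apply: contraTN => p_m.
by apply/negP => /(coprime_dvdl (pchar_dvd_card pF)); rewrite prime_coprime ?p_m.
Qed.

Lemma recip_barp (R : nzRingType) (f : {poly R}) : recip f = barp (size f).-1 f.
Proof.
apply/polyP => i; rewrite !coef_poly; case sf: (size f) => [|s] //=.
by case: ifP => // _; rewrite nth_default // sf.
Qed.

Lemma barp_map (R S : nzRingType) (h : {rmorphism R -> S}) n (f : {poly R}) :
  (barp n f) ^ h = barp n (f ^ h).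
Proof.
apply/polyP => i; rewrite coef_map !coef_poly; case: ifP => _; last exact: raddf0.
by case: ltnP => // f_small; rewrite nth_default // raddf0.
Qed.

Lemma recip_map (F : fieldType) (R : nzRingType) (h : {rmorphism F -> R}) (f : {poly F}) :
  (recip f) ^ h = recip (f ^ h).
Proof. by rewrite !recip_barp size_map_poly barp_map. Qed.

Lemma recip_neq0 (R : nzRingType) (f : {poly R}) : f != 0 -> recip f != 0.
Proof.
move=> f_neq0; apply: contra_neq (f_neq0) => /(congr1 (coefp 0)) /=.
rewrite coef_poly size_poly_gt0 f_neq0 coef0 subn0 -lead_coefE.
by move/eqP; rewrite lead_coef_eq0 => /eqP.
Qed.

Lemma horner_barp (K : fieldType) n (f : {poly K}) x :
  (size f <= n.+1)%N -> x != 0 -> (barp n f).[x] = x ^+ n * f.[x^-1].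
Proof.
move=> f_small x_neq0; rewrite horner_poly (horner_coef_wide _ f_small) mulr_sumr.
rewrite (reindex_inj rev_ord_inj); apply: eq_bigr => i _ /=.
rewrite subSS subKn ?leq_ord // exprB ?leq_ord ?unitfE // exprVn.
by rewrite mulrCA mulrC.
Qed.

Lemma root_recip (K : fieldType) (f : {poly K}) x :
  x != 0 -> root (recip f) x = root f x^-1.
Proof.
move=> x_neq0; rewrite recip_barp !rootE horner_barp ?leqSpred //.
by rewrite mulf_eq0 expf_eq0 (negPf x_neq0) andbF.
Qed.

Lemma root_inv_self_reciprocal (F K : fieldType) (h : {rmorphism F -> K})
    (f : {poly F}) x :
  self_reciprocal f -> x != 0 -> root (f ^ h) x^-1 = root (f ^ h) x.
Proof.
case=> f_neq0 [c recip_f] x_neq0.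
have c_neq0 : c != 0.
  by apply: contra_neq (recip_neq0 f_neq0) => c0; rewrite recip_f c0 scale0r.
by rewrite -root_recip // -recip_map recip_f map_polyZ rootZ ?fmorph_eq0.
Qed.

Lemma coprimep_rootsP (F : fieldType) (K : closedFieldType)
    (h : {rmorphism F -> K}) (a b : {poly F}) :
  coprimep a b <-> forall x, root (a ^ h) x -> ~~ root (b ^ h) x.
Proof.
rewrite -(coprimep_map h); split => [ab x | no_common_root].
  exact: coprimep_root.
apply/negPn/negP => /closed_rootP [x]; rewrite root_gcd => /andP [ax bx].
by have := no_common_root x ax; rewrite bx.
Qed.

Section FactorsOfXnSub1.

Variables (F K : fieldType) (h : {rmorphism F -> K}) (m : nat).
Hypothesis m_neq0 : m%:R != 0 :> F.

Lemma root_map_dvdp a b x : a %| b -> root (a ^ h) x -> root (b ^ h) x.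
Proof. by move=> ab_dvd; apply: root_dvdp; rewrite dvdp_map. Qed.

Let m_gt0 : (0 < m)%N.
Proof. by rewrite lt0n; apply: contra_neq m_neq0 => ->. Qed.

Lemma Xn_sub1_factor_root_expr a x : a %| 'X^m - 1 -> root (a ^ h) x -> x ^+ m = 1.
Proof.
move=> /root_map_dvdp a_Xm /a_Xm.
by rewrite rmorphB /= map_polyXn rmorph1 rootE !hornerE subr_eq0 => /eqP.
Qed.

Lemma Xn_sub1_factor_root_neq0 a x : a %| 'X^m - 1 -> root (a ^ h) x -> x != 0.
Proof.
move=> a_dvd /(Xn_sub1_factor_root_expr a_dvd) x_unity.
by apply: contra_eq_neq x_unity => ->; rewrite expr0n gtn_eqF // eq_sym oner_eq0.
Qed.

Lemma Xn_sub1_factors_no_common_root a b x :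
  a * b %| 'X^m - 1 -> root (a ^ h) x -> ~~ root (b ^ h) x.
Proof.
move=> ab_dvd a_x; apply/negP => b_x.
have ab_coprime := separable_coprime (separable_Xn_sub_1 m_neq0) ab_dvd.
have := coprimep_root (etrans (coprimep_map h a b) ab_coprime) a_x.
by rewrite -rootE b_x.
Qed.

Variables (g11 g12 : {poly F}).
Hypotheses (g11_dvd : g11 %| 'X^m - 1) (g12_small : (size g12 <= m)%N).
Hypothesis g_self_reciprocal : self_reciprocal (gcdp g11 g12).

Local Notation Q := (('X^m - 1) %/ g11).
Local Notation r := (gcdp Q (recip Q)).

Variable x : K.
Hypothesis t_x : root ((Q %/ r) ^ h) x.

Let Q_g11 : Q * g11 = 'X^m - 1. Proof. exact: divpK. Qed.
Let t_r : Q %/ r * r = Q. Proof. exact/divpK/dvdp_gcdl. Qed.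

Let Q_x : root (Q ^ h) x.
Proof. exact: root_map_dvdp (divp_dvd (dvdp_gcdl _ _)) t_x. Qed.

Let x_unity : x ^+ m = 1.
Proof. exact: Xn_sub1_factor_root_expr (divp_dvd g11_dvd) Q_x. Qed.

Let x_neq0 : x != 0.
Proof. exact: Xn_sub1_factor_root_neq0 (divp_dvd g11_dvd) Q_x. Qed.

Let g11_x : ~~ root (g11 ^ h) x.
Proof. by apply: Xn_sub1_factors_no_common_root Q_x; rewrite Q_g11. Qed.

Lemma root_g11_inv : root (g11 ^ h) x^-1.
Proof.
have Q_xV : ~~ root (Q ^ h) x^-1.
  apply/negP => Q_xV; have r_x : root (r ^ h) x.
    by rewrite gcdp_map root_gcd Q_x recip_map root_recip.
  have tr_dvd : Q %/ r * r %| 'X^m - 1 by rewrite t_r divp_dvd.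
  by rewrite (negPf (Xn_sub1_factors_no_common_root tr_dvd t_x)) in r_x.
have : root (('X^m - 1) ^ h) x^-1.
  by rewrite rmorphB /= map_polyXn rmorph1 rootE !hornerE exprVn x_unity invr1 subrr.
by rewrite -Q_g11 rmorphM rootM (negPf Q_xV).
Qed.

Lemma not_root_g12_inv : ~~ root (g12 ^ h) x^-1.
Proof.
apply/negP => g12_xV.
have g_x : root (gcdp g11 g12 ^ h) x.
  by rewrite -root_inv_self_reciprocal // gcdp_map root_gcd root_g11_inv.
by have := root_map_dvdp (dvdp_gcdl g11 g12) g_x; rewrite (negPf g11_x).
Qed.

Lemma root_g12_sum :
  root (g12 ^ h) x = root ((g11 * barp m g11 + g12 * barp m g12) ^ h) x.
Proof.
have Xm_neq0 : 'X^m - 1 != 0 :> {poly F}.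
  by rewrite -[1]/(1%:P) monic_neq0 // monicXnsubC.
have size_g11 : (size (g11 ^ h)%R <= m.+1)%N.
  by rewrite size_map_poly -(size_XnsubC (1 : F) m_gt0) polyC1 dvdp_leq.
have size_g12 : (size (g12 ^ h)%R <= m.+1)%N by rewrite size_map_poly ltnW.
rewrite rmorphD !rmorphM /= !barp_map !rootE hornerD !hornerM !horner_barp //.
rewrite x_unity !mul1r.
move: root_g11_inv not_root_g12_inv; rewrite !rootE => /eqP -> g12_xV.
by rewrite mulr0 add0r mulf_eq0 (negPf g12_xV) orbF.
Qed.

End FactorsOfXnSub1.

Theorem lemma4p1 (F : finFieldType) (m : nat) (g11 g12 : {poly F}) :
  (0 < m)%N -> coprime #|F| m ->
  g11 %| 'X^m - 1 -> (size g12 <= m)%N ->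
  let g := gcdp g11 g12 in
  let g11' := g11 %/ g in
  let g22 := ('X^m - 1) %/ g11' in
  let g22' := g22 %/ g in
  let r22 := gcdp g22' (recip g22') in
  let t22 := g22' %/ r22 in
  self_reciprocal g ->
  (coprimep t22 g12 <->
   coprimep t22 (g11 * barp m g11 + g12 * barp m g12)).
Proof.
move=> _ F_m_coprime g11_dvd g12_small g g11' g22 g22' r22 t22 g_self_reciprocal.
have m_neq0 := natf_neq0_coprime_card F_m_coprime.
have g22'_cofactor : g22' = ('X^m - 1) %/ g11.
  by rewrite /g22' /g22 divp_divl divpK // dvdp_gcdl.
have [K [h _]] := countable_algebraic_closure F.
rewrite /t22 /r22 g22'_cofactor.
have root_sum := root_g12_sum (h := h) m_neq0 g11_dvd g12_small g_self_reciprocal.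
by split=> /(coprimep_rootsP h) t_coprime; apply/(coprimep_rootsP h) => x t_x;
  have := t_coprime x t_x; rewrite (root_sum x t_x).
Qed.
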